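(* Every endofunctor on $\mathsf{Nom}$ generated by the grammar $$F::=\mathcal V\mid K\mid \mathrm{Id}\mid \textstyle\coprod F\mid F\times F\mid [\mathcal V]F$$ preserves monomorphisms, epimorphisms and limits of $\omega^{op}$-chains, and is $\mathsf{Nom}$-enriched.
   Context: Nominal sets over a countably infinite set $\mathcal V$ of names; $\mathsf{Nom}$ has equivariant maps. In the grammar, $\mathcal V$ is the constant functor at the nominal set of names (action $\pi\cdot x=\pi(x)$), $K$ is any constant functor, $\mathrm{Id}$ the identity, $\coprod F$ an at most countable coproduct of such functors, $F\times F$ the pointwise binary product, and $[\mathcal V]F$ the composite $X\mapsto[\mathcal V](FX)$ with the abstraction functor: $[\mathcal V]X$ is the quotient of $\mathcal V\times X$ by $(x_1,u_1)\sim(x_2,u_2)$ iff $(x_1\ z)\cdot u_1=(x_2\ z)\cdot u_2$ for some name $z$ fresh for $x_1,u_1,x_2,u_2$, with $[\mathcal V]f(\langle x\rangle u)=\langle x\rangle f(u)$. $F$ is $\mathsf{Nom}$-enriched if it extends to finitely supported functions so that $[X,Y]\to[FX,FY]$, $f\mapsto Ff$, is equivariant and functorial, where $[X,Y]$ is the nominal set of finitely supported functions with action $(\pi\cdot f)(u)=\pi\cdot f(\pi^{-1}\cdot u)$. *)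

(* Nominal sets over the countably infinite set of names
   V := nat, permutations = finitely supported bijections of nat. *)
From Stdlib Require Import Arith Lia List ClassicalEpsilon.
Import ListNotations.

Record perm := Perm {
  pf : nat -> nat;
  pinv : nat -> nat;
  pf_K : forall n, pinv (pf n) = n;
  pinv_K : forall n, pf (pinv n) = n;
  pf_fin : exists b, forall n, b <= n -> pf n = n }.

Definition pid : perm.
Proof.
  refine (Perm (fun n => n) (fun n => n) (fun _ => eq_refl) (fun _ => eq_refl) _).
  exists 0; reflexivity.
Defined.

Definition pcomp (p q : perm) : perm.
Proof.
  refine (Perm (fun n => pf p (pf q n)) (fun n => pinv q (pinv p n)) _ _ _).
  - intro n; rewrite !pf_K; reflexivity.
  - intro n; rewrite !pinv_K; reflexivity.
  - destruct (pf_fin p) as [bp Hp], (pf_fin q) as [bq Hq].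
    exists (bp + bq); intros n Hn. rewrite Hq by lia. apply Hp; lia.
Defined.

Definition pinvp (p : perm) : perm.
Proof.
  refine (Perm (pinv p) (pf p) (pinv_K p) (pf_K p) _).
  destruct (pf_fin p) as [b Hb]. exists b; intros n Hn.
  rewrite <- (Hb n Hn) at 1. apply pf_K.
Defined.

Definition swapf (a b n : nat) : nat :=
  if Nat.eqb n a then b else if Nat.eqb n b then a else n.

Lemma swapf_invol a b n : swapf a b (swapf a b n) = n.
Proof.
  unfold swapf.
  destruct (Nat.eqb_spec n a); destruct (Nat.eqb_spec n b); subst;
  repeat (rewrite ?Nat.eqb_refl; simpl);
  repeat match goal with |- context [Nat.eqb ?x ?y] => destruct (Nat.eqb_spec x y) end;
  subst; try reflexivity; try congruence.
Qed.

Definition swap (a b : nat) : perm.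
Proof.
  refine (Perm (swapf a b) (swapf a b) (swapf_invol a b) (swapf_invol a b) _).
  exists (S (a + b)); intros n Hn. unfold swapf.
  destruct (Nat.eqb_spec n a); [lia|]. destruct (Nat.eqb_spec n b); [lia|]. reflexivity.
Defined.

Record preNom := PreNom { car : Type; act : perm -> car -> car }.

Definition fixes (p : perm) (A : list nat) : Prop := forall a, In a A -> pf p a = a.

Definition supports (X : preNom) (A : list nat) (u : car X) : Prop :=
  forall p, fixes p A -> act X p u = u.

Definition fresh (X : preNom) (z : nat) (u : car X) : Prop :=
  exists A, supports X A u /\ ~ In z A.

Definition nominal (X : preNom) : Prop :=
  (forall u, act X pid u = u) /\
  (forall p q u, act X (pcomp p q) u = act X p (act X q u)) /\
  (forall u, exists A, supports X A u).

Definition equivariant (X Y : preNom) (f : car X -> car Y) : Prop :=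
  forall p u, f (act X p u) = act Y p (f u).

Definition fun_act (X Y : preNom) (p : perm) (f : car X -> car Y) : car X -> car Y :=
  fun u => act Y p (f (act X (pinvp p) u)).

(* f is a finitely supported function, i.e. an element of [X,Y] *)
Definition fin_supp_fun (X Y : preNom) (f : car X -> car Y) : Prop :=
  exists A, forall p, fixes p A -> forall u, fun_act X Y p f u = f u.

Definition NamesN : preNom := PreNom nat (fun p x => pf p x).

Definition SumN (I : Type) (Xs : I -> preNom) : preNom :=
  PreNom {i : I & car (Xs i)} (fun p s => existT _ (projT1 s) (act (Xs (projT1 s)) p (projT2 s))).

Definition ProdN (X Y : preNom) : preNom :=
  PreNom (car X * car Y)%type (fun p u => (act X p (fst u), act Y p (snd u))).

Definition alpha (X : preNom) (q1 q2 : nat * car X) : Prop :=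
  exists z, z <> fst q1 /\ z <> fst q2 /\ fresh X z (snd q1) /\ fresh X z (snd q2) /\
    act X (swap (fst q1) z) (snd q1) = act X (swap (fst q2) z) (snd q2).

(* the quotient (V x X)/~ : elements are the ~-classes *)
Definition abs_car (X : preNom) : Type :=
  { P : nat * car X -> Prop | exists q, P = alpha X q }.

Definition abs_cls (X : preNom) (q : nat * car X) : abs_car X :=
  exist _ (alpha X q) (ex_intro _ q eq_refl).

Definition abs_rep (X : preNom) (c : abs_car X) : nat * car X :=
  proj1_sig (constructive_indefinite_description _ (proj2_sig c)).

Definition AbsN (X : preNom) : preNom :=
  PreNom (abs_car X)
    (fun p c => abs_cls X (pf p (fst (abs_rep X c)), act X p (snd (abs_rep X c)))).

Definition abs_map (X Y : preNom) (f : car X -> car Y) (c : abs_car X) : abs_car Y :=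
  abs_cls Y (fst (abs_rep X c), f (snd (abs_rep X c))).

Inductive Fsyn : Type :=
| FV : Fsyn
| FK (K : preNom) (HK : nominal K) : Fsyn
| FId : Fsyn
| FCoprod (I : Type) (HI : exists e : I -> nat, forall i j, e i = e j -> i = j)
          (Fs : I -> Fsyn) : Fsyn            (* at most countable coproduct *)
| FProd (F1 F2 : Fsyn) : Fsyn
| FAbs (F : Fsyn) : Fsyn.

Fixpoint Fobj (F : Fsyn) (X : preNom) : preNom :=
  match F with
  | FV => NamesN
  | FK K _ => K
  | FId => X
  | FCoprod J _ Fs => SumN J (fun i => Fobj (Fs i) X)
  | FProd F1 F2 => ProdN (Fobj F1 X) (Fobj F2 X)
  | FAbs F1 => AbsN (Fobj F1 X)
  end.

Fixpoint Fmap (F : Fsyn) (X Y : preNom) (f : car X -> car Y) {struct F}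
  : car (Fobj F X) -> car (Fobj F Y) :=
  match F as F0 return car (Fobj F0 X) -> car (Fobj F0 Y) with
  | FV => fun x => x
  | FK K _ => fun k => k
  | FId => f
  | FCoprod J _ Fs => fun s =>
      existT _ (projT1 s) (Fmap (Fs (projT1 s)) X Y f (projT2 s))
  | FProd F1 F2 => fun u => (Fmap F1 X Y f (fst u), Fmap F2 X Y f (snd u))
  | FAbs F1 => abs_map (Fobj F1 X) (Fobj F1 Y) (Fmap F1 X Y f)
  end.

Definition is_mono (X Y : preNom) (f : car X -> car Y) : Prop :=
  forall Z : preNom, nominal Z -> forall g h : car Z -> car X,
    equivariant Z X g -> equivariant Z X h ->
    (forall z, f (g z) = f (h z)) -> forall z, g z = h z.

Definition is_epi (X Y : preNom) (f : car X -> car Y) : Prop :=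
  forall Z : preNom, nominal Z -> forall g h : car Y -> car Z,
    equivariant Y Z g -> equivariant Y Z h ->
    (forall x, g (f x) = h (f x)) -> forall y, g y = h y.

Definition is_chain (D : nat -> preNom) (d : forall n, car (D (S n)) -> car (D n)) : Prop :=
  (forall n, nominal (D n)) /\ (forall n, equivariant (D (S n)) (D n) (d n)).

Definition is_cone (D : nat -> preNom) (d : forall n, car (D (S n)) -> car (D n))
  (L : preNom) (pi : forall n, car L -> car (D n)) : Prop :=
  nominal L /\ (forall n, equivariant L (D n) (pi n)) /\
  (forall n u, d n (pi (S n) u) = pi n u).

Definition is_limit (D : nat -> preNom) (d : forall n, car (D (S n)) -> car (D n))
  (L : preNom) (pi : forall n, car L -> car (D n)) : Prop :=
  is_cone D d L pi /\
  forall (Z : preNom) (c : forall n, car Z -> car (D n)), is_cone D d Z c ->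
    exists u : car Z -> car L, equivariant Z L u /\ (forall n z, pi n (u z) = c n z) /\
      forall u' : car Z -> car L, equivariant Z L u' -> (forall n z, pi n (u' z) = c n z) ->
        forall z, u' z = u z.

Definition is_endofunctor (F : Fsyn) : Prop :=
  (forall X, nominal X -> nominal (Fobj F X)) /\
  (forall X Y f, nominal X -> nominal Y -> equivariant X Y f ->
     equivariant (Fobj F X) (Fobj F Y) (Fmap F X Y f)) /\
  (forall X, nominal X -> forall u, Fmap F X X (fun x => x) u = u) /\
  (forall X Y Z f g, nominal X -> nominal Y -> nominal Z ->
     equivariant X Y f -> equivariant Y Z g ->
     forall u, Fmap F X Z (fun x => g (f x)) u = Fmap F Y Z g (Fmap F X Y f u)).

Definition preserves_mono (F : Fsyn) : Prop :=
  forall X Y f, nominal X -> nominal Y -> equivariant X Y f ->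
    is_mono X Y f -> is_mono (Fobj F X) (Fobj F Y) (Fmap F X Y f).

Definition preserves_epi (F : Fsyn) : Prop :=
  forall X Y f, nominal X -> nominal Y -> equivariant X Y f ->
    is_epi X Y f -> is_epi (Fobj F X) (Fobj F Y) (Fmap F X Y f).

Definition preserves_omega_op_limits (F : Fsyn) : Prop :=
  forall D d L pi, is_chain D d -> is_limit D d L pi ->
    is_limit (fun n => Fobj F (D n)) (fun n => Fmap F (D (S n)) (D n) (d n))
             (Fobj F L) (fun n => Fmap F L (D n) (pi n)).

(* F extends to finitely supported functions, [X,Y] -> [FX,FY] being
   equivariant and functorial *)
Definition nom_enriched (F : Fsyn) : Prop :=
  exists Ffs : forall X Y : preNom, (car X -> car Y) -> car (Fobj F X) -> car (Fobj F Y),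
    (forall X Y f, nominal X -> nominal Y -> equivariant X Y f ->
       forall u, Ffs X Y f u = Fmap F X Y f u) /\
    (forall X Y f, nominal X -> nominal Y -> fin_supp_fun X Y f ->
       fin_supp_fun (Fobj F X) (Fobj F Y) (Ffs X Y f)) /\
    (forall X Y f p, nominal X -> nominal Y -> fin_supp_fun X Y f ->
       forall u, Ffs X Y (fun_act X Y p f) u = fun_act (Fobj F X) (Fobj F Y) p (Ffs X Y f) u) /\
    (forall X, nominal X -> forall u, Ffs X X (fun x => x) u = u) /\
    (forall X Y Z f g, nominal X -> nominal Y -> nominal Z ->
       fin_supp_fun X Y f -> fin_supp_fun Y Z g ->
       forall u, Ffs X Z (fun x => g (f x)) u = Ffs Y Z g (Ffs X Y f u)).

(* The proof is by structural induction on F, after reducing every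
   categorical property to a concrete one:
   - monos and epis of Nom are exactly the injective and surjective
     equivariant maps (kernel pairs and the two-element nominal set detect
     them), and each constructor visibly preserves injectivity and
     surjectivity;
   - a cone over an omega^op-chain is a limit iff its projections are jointly
     injective and reach every compatible family with a uniform finite
     support (these families form the concrete limit), and each constructor
     preserves both properties; for [V]F one abstracts a single name fresh
     for the uniform support;
   - for enrichment, F is extended to finitely supported maps; the only
     nontrivial clause is [V]f, defined on a representative <a>u whose bound
     name a avoids a support of f.  The key fact is that a map supported by
     A respects alpha-equivalence of pairs whose names avoid A. *)

From Stdlib Require Import Arith Lia List ClassicalEpsilon FunctionalExtensionality
  ProofIrrelevance PropExtensionality Eqdep.
Import ListNotations.

Lemma sig_eq {A : Type} (P : A -> Prop) (x y : sig P) : proj1_sig x = proj1_sig y -> x = y.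
Proof. destruct x, y; simpl; intro; subst; f_equal; apply proof_irrelevance. Qed.

Lemma nat_choice (T : nat -> Type) (P : forall n, T n -> Prop) :
  (forall n, exists y, P n y) -> exists y : forall n, T n, forall n, P n (y n).
Proof.
  intro H. exists (fun n => proj1_sig (constructive_indefinite_description _ (H n))).
  intro n; exact (proj2_sig (constructive_indefinite_description _ (H n))).
Qed.

Definition choose_or {A : Type} (P : A -> Prop) (d : A) : A :=
  match excluded_middle_informative (exists x, P x) with
  | left H => proj1_sig (constructive_indefinite_description _ H)
  | right _ => d
  end.

Lemma choose_or_spec {A : Type} (P : A -> Prop) (d : A) : (exists x, P x) -> P (choose_or P d).
Proof.
  intro H; unfold choose_or. destruct (excluded_middle_informative _) as [E|N].
  - exact (proj2_sig (constructive_indefinite_description _ E)).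
  - contradiction.
Qed.

Lemma perm_ext (p q : perm) : (forall n, pf p n = pf q n) -> p = q.
Proof.
  destruct p as [f g fK gK ff], q as [f' g' fK' gK' ff']; simpl; intro H.
  assert (f = f') by (apply functional_extensionality; auto). subst f'.
  assert (g = g').
  { apply functional_extensionality; intro n. rewrite <- (gK' n) at 1. rewrite fK. reflexivity. }
  subst g'. f_equal; apply proof_irrelevance.
Qed.

Lemma pf_inj (p : perm) a b : pf p a = pf p b -> a = b.
Proof. intro H. rewrite <- (pf_K p a), <- (pf_K p b), H. reflexivity. Qed.

Ltac swap_cases := unfold swapf;
  repeat (match goal with
          | |- context [Nat.eqb ?x ?y] => destruct (Nat.eqb_spec x y)
          | H : context [Nat.eqb ?x ?y] |- _ => destruct (Nat.eqb_spec x y)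
          end; simpl in *);
  try congruence; try lia.

Lemma swap_same a : swap a a = pid.
Proof. apply perm_ext; intro n; simpl; swap_cases. Qed.

Lemma swap_swap a b : pcomp (swap a b) (swap a b) = pid.
Proof. apply perm_ext; intro n; simpl; apply swapf_invol. Qed.

Lemma swap_via_third z z' w : z <> z' -> w <> z -> w <> z' ->
  swap z z' = pcomp (swap z w) (pcomp (swap z' w) (swap z w)).
Proof. intros; apply perm_ext; intro n; simpl; swap_cases. Qed.

Lemma swap_shift a w z : a <> w -> a <> z ->
  pcomp (swap w z) (swap a w) = pcomp (swap a z) (swap w z).
Proof. intros; apply perm_ext; intro n; simpl; swap_cases. Qed.

Lemma swap_conj (p : perm) a z :
  pcomp p (swap a z) = pcomp (swap (pf p a) (pf p z)) p.
Proof.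
  apply perm_ext; intro n; simpl. unfold swapf.
  destruct (Nat.eqb_spec n a); subst.
  - rewrite Nat.eqb_refl. reflexivity.
  - destruct (Nat.eqb_spec (pf p n) (pf p a)) as [E|E]; [apply pf_inj in E; congruence|].
    destruct (Nat.eqb_spec n z); subst.
    + rewrite Nat.eqb_refl. reflexivity.
    + destruct (Nat.eqb_spec (pf p n) (pf p z)) as [E'|E']; [apply pf_inj in E'; congruence|].
      reflexivity.
Qed.

Lemma pinvp_l p : pcomp (pinvp p) p = pid.
Proof. apply perm_ext; intro n; simpl; apply pf_K. Qed.
Lemma pinvp_r p : pcomp p (pinvp p) = pid.
Proof. apply perm_ext; intro n; simpl; apply pinv_K. Qed.
Lemma pcomp_assoc p q r : pcomp p (pcomp q r) = pcomp (pcomp p q) r.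
Proof. apply perm_ext; intro n; reflexivity. Qed.
Lemma pcomp_id_l p : pcomp pid p = p.
Proof. apply perm_ext; intro n; reflexivity. Qed.

Lemma fixes_swap a b A : ~ In a A -> ~ In b A -> fixes (swap a b) A.
Proof.
  intros Ha Hb x Hx; simpl; unfold swapf.
  destruct (Nat.eqb_spec x a); [subst; contradiction|].
  destruct (Nat.eqb_spec x b); [subst; contradiction|]. reflexivity.
Qed.

Lemma fixes_inv p A : fixes p A -> fixes (pinvp p) A.
Proof. intros H a Ha; simpl. rewrite <- (H a Ha) at 1. apply pf_K. Qed.

Lemma fixes_app_l p A B : fixes p (A ++ B) -> fixes p A.
Proof. intros H a Ha; apply H, in_or_app; auto. Qed.
Lemma fixes_app_r p A B : fixes p (A ++ B) -> fixes p B.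
Proof. intros H a Ha; apply H, in_or_app; auto. Qed.

Lemma exists_fresh (A : list nat) : exists z, ~ In z A.
Proof.
  assert (exists z, forall a, In a A -> a < z) as [z Hz].
  { induction A as [|x A [z IH]]; [exists 0; simpl; tauto|].
    exists (S (x + z)); intros a [->|Ha]; [lia|]. specialize (IH a Ha); lia. }
  exists z; intro H; specialize (Hz z H); lia.
Qed.

Lemma not_in_map (p : perm) z A : ~ In z A -> ~ In (pf p z) (map (pf p) A).
Proof. intros H H'. apply in_map_iff in H' as [x [E Hx]]. apply pf_inj in E; subst; auto. Qed.

(* Discharge [~ In z L] and [z <> a] when [Hz : ~ In z M] and M lists L, a. *)
Ltac avoid Hz := let E := fresh in
  intro E; apply Hz; subst; simpl in *; rewrite ?in_app_iff in *; intuition auto.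

(** * Nominal sets and the abstraction quotient *)

Section NominalSet.
Variable X : preNom.
Hypothesis HX : nominal X.

Lemma act_id u : act X pid u = u.
Proof. apply (proj1 HX). Qed.
Lemma act_comp p q u : act X (pcomp p q) u = act X p (act X q u).
Proof. apply (proj1 (proj2 HX)). Qed.
Lemma has_supp u : exists A, supports X A u.
Proof. apply (proj2 (proj2 HX)). Qed.

Lemma act_inv_l p u : act X (pinvp p) (act X p u) = u.
Proof. rewrite <- act_comp, pinvp_l; apply act_id. Qed.
Lemma act_inv_r p u : act X p (act X (pinvp p) u) = u.
Proof. rewrite <- act_comp, pinvp_r; apply act_id. Qed.
Lemma act_swap_invol a b u : act X (swap a b) (act X (swap a b) u) = u.
Proof. rewrite <- act_comp, swap_swap; apply act_id. Qed.

Lemma fresh_supp z A u : supports X A u -> ~ In z A -> fresh X z u.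
Proof. intros; exists A; auto. Qed.

Lemma supports_act A p u : supports X A u -> supports X (map (pf p) A) (act X p u).
Proof.
  intros H q Hq. rewrite <- act_comp.
  assert (pcomp q p = pcomp p (pcomp (pinvp p) (pcomp q p))) as ->.
  { rewrite !pcomp_assoc, pinvp_r, pcomp_id_l; reflexivity. }
  rewrite act_comp, H; [reflexivity|].
  intros a Ha; simpl. rewrite (Hq (pf p a)) by (apply in_map; auto). apply pf_K.
Qed.

Lemma fresh_act z p u : fresh X z u -> fresh X (pf p z) (act X p u).
Proof.
  intros [A [HA Hz]]. exists (map (pf p) A); split; [apply supports_act|apply not_in_map]; auto.
Qed.

Lemma swap_fresh z z' u : fresh X z u -> fresh X z' u -> act X (swap z z') u = u.
Proof.
  intros [A1 [H1 Hz1]] [A2 [H2 Hz2]].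
  destruct (Nat.eq_dec z z') as [<-|Hne]; [rewrite swap_same; apply act_id|].
  destruct (exists_fresh (z :: z' :: A1 ++ A2)) as [w Hw].
  rewrite (swap_via_third z z' w) by (auto; avoid Hw).
  assert (E1 : act X (swap z w) u = u) by (apply H1, fixes_swap; auto; avoid Hw).
  assert (E2 : act X (swap z' w) u = u) by (apply H2, fixes_swap; auto; avoid Hw).
  rewrite !act_comp, E1, E2, E1; reflexivity.
Qed.

Lemma alpha_all a1 u1 a2 u2 : alpha X (a1, u1) (a2, u2) ->
  forall z, z <> a1 -> z <> a2 -> fresh X z u1 -> fresh X z u2 ->
  act X (swap a1 z) u1 = act X (swap a2 z) u2.
Proof.
  intros [w [Hw1 [Hw2 [Hf1 [Hf2 E]]]]] z Hz1 Hz2 Hzf1 Hzf2; simpl in *.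
  assert (Shift : forall a u, a <> w -> a <> z -> fresh X w u -> fresh X z u ->
             act X (swap w z) (act X (swap a w) u) = act X (swap a z) u).
  { intros a u H1 H2 H3 H4. rewrite <- act_comp, swap_shift by auto.
    rewrite act_comp, (swap_fresh w z u) by auto. reflexivity. }
  rewrite <- (Shift a1 u1), <- (Shift a2 u2) by first [congruence | auto]. rewrite E; reflexivity.
Qed.

Lemma alpha_of_all a1 u1 a2 u2 :
  (forall z, z <> a1 -> z <> a2 -> fresh X z u1 -> fresh X z u2 ->
   act X (swap a1 z) u1 = act X (swap a2 z) u2) -> alpha X (a1, u1) (a2, u2).
Proof.
  intro H. destruct (has_supp u1) as [A1 H1], (has_supp u2) as [A2 H2].
  destruct (exists_fresh (a1 :: a2 :: A1 ++ A2)) as [z Hz].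
  assert (F1 : fresh X z u1) by (apply (fresh_supp z A1); auto; avoid Hz).
  assert (F2 : fresh X z u2) by (apply (fresh_supp z A2); auto; avoid Hz).
  exists z; simpl; repeat split; auto; try avoid Hz.
  apply H; auto; avoid Hz.
Qed.

Lemma alpha_refl q : alpha X q q.
Proof. destruct q; apply alpha_of_all; auto. Qed.

Lemma alpha_sym q1 q2 : alpha X q1 q2 -> alpha X q2 q1.
Proof. intros [z [H1 [H2 [H3 [H4 H5]]]]]; exists z; repeat split; auto. Qed.

Lemma alpha_trans q1 q2 q3 : alpha X q1 q2 -> alpha X q2 q3 -> alpha X q1 q3.
Proof.
  destruct q1 as [a1 u1], q2 as [a2 u2], q3 as [a3 u3]; intros H12 H23.
  destruct (has_supp u1) as [A1 S1], (has_supp u2) as [A2 S2], (has_supp u3) as [A3 S3].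
  destruct (exists_fresh (a1 :: a2 :: a3 :: A1 ++ A2 ++ A3)) as [z Hz].
  assert (F1 : fresh X z u1) by (apply (fresh_supp z A1); auto; avoid Hz).
  assert (F2 : fresh X z u2) by (apply (fresh_supp z A2); auto; avoid Hz).
  assert (F3 : fresh X z u3) by (apply (fresh_supp z A3); auto; avoid Hz).
  exists z; simpl; repeat split; auto; try avoid Hz.
  rewrite (alpha_all _ _ _ _ H12 z), (alpha_all _ _ _ _ H23 z); auto; avoid Hz.
Qed.

Lemma cls_eq q1 q2 : alpha X q1 q2 -> abs_cls X q1 = abs_cls X q2.
Proof.
  intro H. apply sig_eq; simpl. apply functional_extensionality; intro q.
  apply propositional_extensionality; split; intro H'.
  - eapply alpha_trans; [apply alpha_sym, H|exact H'].
  - eapply alpha_trans; [apply H|exact H'].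
Qed.

Lemma cls_inj q1 q2 : abs_cls X q1 = abs_cls X q2 -> alpha X q1 q2.
Proof.
  intro H. apply (f_equal (@proj1_sig _ _)) in H; simpl in H.
  rewrite H. apply alpha_refl.
Qed.

Lemma rep_cls c : abs_cls X (abs_rep X c) = c.
Proof.
  unfold abs_rep. destruct (constructive_indefinite_description _ _) as [q Hq]; simpl.
  apply sig_eq; simpl; auto.
Qed.

Lemma cls_surj c : exists q, c = abs_cls X q.
Proof. exists (abs_rep X c); symmetry; apply rep_cls. Qed.

Lemma alpha_rep q : alpha X (abs_rep X (abs_cls X q)) q.
Proof. apply cls_inj; rewrite rep_cls; reflexivity. Qed.

Lemma alpha_act p a1 u1 a2 u2 : alpha X (a1, u1) (a2, u2) ->
  alpha X (pf p a1, act X p u1) (pf p a2, act X p u2).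
Proof.
  intros [z [H1 [H2 [H3 [H4 H5]]]]]; simpl in *.
  exists (pf p z); simpl; repeat split; try (apply fresh_act; auto).
  - intro E; apply pf_inj in E; auto.
  - intro E; apply pf_inj in E; auto.
  - rewrite <- !act_comp, <- !swap_conj, !act_comp, H5; reflexivity.
Qed.

Lemma act_cls p a u : act (AbsN X) p (abs_cls X (a, u)) = abs_cls X (pf p a, act X p u).
Proof.
  simpl. apply cls_eq. pose proof (alpha_rep (a, u)) as H.
  destruct (abs_rep X (abs_cls X (a, u))) as [a' u']; simpl. apply alpha_act; auto.
Qed.

Lemma alpha_swap_fresh a b u : fresh X b u -> alpha X (a, u) (b, act X (swap a b) u).
Proof.
  intro Hb. destruct (Nat.eq_dec a b) as [<-|Hab]; [rewrite swap_same, act_id; apply alpha_refl|].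
  apply alpha_of_all; intros z Hz1 Hz2 Hf1 Hf2.
  rewrite <- act_comp, swap_shift by auto. rewrite act_comp.
  rewrite (swap_fresh b z u) by auto. reflexivity.
Qed.

Lemma cls_avoiding (C : list nat) (c : abs_car X) : exists q, ~ In (fst q) C /\ c = abs_cls X q.
Proof.
  destruct (cls_surj c) as [[a0 u0] ->]. destruct (has_supp u0) as [B HB].
  destruct (exists_fresh (C ++ B)) as [b Hb].
  exists (b, act X (swap a0 b) u0); split; simpl; [avoid Hb|].
  apply cls_eq, alpha_swap_fresh, (fresh_supp b B); auto; avoid Hb.
Qed.

Lemma cls_inj_same a u v : abs_cls X (a, u) = abs_cls X (a, v) -> u = v.
Proof.
  intro H; apply cls_inj in H. destruct H as [z [_ [_ [_ [_ E]]]]]; simpl in E.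
  rewrite <- (act_swap_invol a z u), E, act_swap_invol; reflexivity.
Qed.

Lemma AbsN_nominal : nominal (AbsN X).
Proof.
  split; [|split].
  - intro c; destruct (cls_surj c) as [[a u] ->]. rewrite act_cls, act_id; reflexivity.
  - intros p q c; destruct (cls_surj c) as [[a u] ->]. rewrite !act_cls, act_comp; reflexivity.
  - intro c; destruct (cls_surj c) as [[a u] ->]. destruct (has_supp u) as [A HA].
    exists (a :: A); intros p Hp. rewrite act_cls, (Hp a) by (left; auto).
    rewrite HA; [reflexivity|]. intros x Hx; apply Hp; right; auto.
Qed.

Lemma cls_supp A b w : supports (AbsN X) A (abs_cls X (b, w)) -> supports X (b :: A) w.
Proof.
  intros H p Hp. apply (cls_inj_same b).
  rewrite <- (Hp b) at 1 by (left; auto). rewrite <- act_cls.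
  apply H; intros x Hx; apply Hp; right; auto.
Qed.

Lemma cls_at A a c : supports (AbsN X) A c -> ~ In a A -> exists y, c = abs_cls X (a, y).
Proof.
  intros H Ha. destruct (cls_avoiding (a :: A) c) as [[b w] [Hb ->]]; simpl in Hb.
  exists (act X (swap b a) w). apply cls_eq, alpha_swap_fresh.
  apply (fresh_supp a (b :: A)); [apply cls_supp; auto|].
  intros [E|E]; [subst; apply Hb; left; auto|contradiction].
Qed.

End NominalSet.

(** * Maps supported by a finite set of names *)

(* g commutes with every permutation fixing A; A = [] is equivariance, and
   for nominal X, Y this is "A supports g" in [X,Y] (lemma eqv_on_fin). *)
Definition eqv_on (X Y : preNom) (g : car X -> car Y) (A : list nat) : Prop :=
  forall p, fixes p A -> forall u, g (act X p u) = act Y p (g u).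

Lemma eqv_equiv X Y g : equivariant X Y g -> eqv_on X Y g [].
Proof. intros H p _ u; apply H. Qed.

Lemma eqv_on_supports X Y g A B u : eqv_on X Y g A -> supports X B u -> supports Y (A ++ B) (g u).
Proof.
  intros H HB p Hp. rewrite <- H by (eapply fixes_app_l; eauto). rewrite HB; auto.
  eapply fixes_app_r; eauto.
Qed.

Lemma fresh_map X Y f z u : equivariant X Y f -> fresh X z u -> fresh Y z (f u).
Proof.
  intros Hf [A [HA Hz]]. exists A; split; auto.
  apply (eqv_on_supports X Y f [] A); auto; apply eqv_equiv; auto.
Qed.

Lemma alpha_map_on X Y (HX : nominal X) (HY : nominal Y) g A1 A2 a1 u1 a2 u2 :
  eqv_on X Y g A1 -> eqv_on X Y g A2 -> ~ In a1 A1 -> ~ In a2 A2 ->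
  alpha X (a1, u1) (a2, u2) -> alpha Y (a1, g u1) (a2, g u2).
Proof.
  intros H1 H2 Ha1 Ha2 Hal.
  destruct (has_supp X HX u1) as [S1 HS1], (has_supp X HX u2) as [S2 HS2].
  destruct (exists_fresh (a1 :: a2 :: A1 ++ A2 ++ S1 ++ S2)) as [z Hz].
  assert (F1 : fresh X z u1) by (apply (fresh_supp X z S1); auto; avoid Hz).
  assert (F2 : fresh X z u2) by (apply (fresh_supp X z S2); auto; avoid Hz).
  exists z; simpl; repeat split; try avoid Hz.
  - apply (fresh_supp Y z (A1 ++ S1)); [apply eqv_on_supports; auto|avoid Hz].
  - apply (fresh_supp Y z (A2 ++ S2)); [apply eqv_on_supports; auto|avoid Hz].
  - rewrite <- H1, <- H2 by (apply fixes_swap; auto; avoid Hz).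
    rewrite (alpha_all X HX _ _ _ _ Hal z); auto; avoid Hz.
Qed.

Lemma abs_map_cls (X Y : preNom) f a u : nominal X -> nominal Y -> equivariant X Y f ->
  abs_map X Y f (abs_cls X (a, u)) = abs_cls Y (a, f u).
Proof.
  intros HX HY Hf. unfold abs_map. apply cls_eq; auto.
  pose proof (alpha_rep X HX (a, u)) as H.
  destruct (abs_rep X (abs_cls X (a, u))) as [a' u']; simpl.
  apply (alpha_map_on X Y HX HY f [] []); auto; apply eqv_equiv; auto.
Qed.

Lemma names_nominal : nominal NamesN.
Proof.
  split; [|split]; simpl; auto.
  intro x; exists [x]; intros p Hp; simpl; apply Hp; left; auto.
Qed.

Lemma sum_nominal I (Xs : I -> preNom) : (forall i, nominal (Xs i)) -> nominal (SumN I Xs).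
Proof.
  intro H; split; [|split]; simpl.
  - intros [i u]; simpl; rewrite act_id; auto.
  - intros p q [i u]; simpl; rewrite act_comp; auto.
  - intros [i u]; destruct (has_supp _ (H i) u) as [A HA]; exists A; intros p Hp; simpl.
    rewrite HA; auto.
Qed.

Lemma prod_nominal X Y : nominal X -> nominal Y -> nominal (ProdN X Y).
Proof.
  intros H1 H2; split; [|split]; simpl.
  - intros [u v]; simpl; rewrite !act_id; auto.
  - intros p q [u v]; simpl; rewrite !act_comp; auto.
  - intros [u v]; destruct (has_supp _ H1 u) as [A HA], (has_supp _ H2 v) as [B HB].
    exists (A ++ B); intros p Hp; simpl.
    rewrite HA, HB; auto; [eapply fixes_app_r|eapply fixes_app_l]; eauto.
Qed.

Lemma Fobj_nominal F : forall X, nominal X -> nominal (Fobj F X).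
Proof.
  induction F; simpl; intros; auto using names_nominal, sum_nominal, prod_nominal, AbsN_nominal.
Qed.

Lemma Fmap_equiv F : forall X Y f, nominal X -> nominal Y -> equivariant X Y f ->
  equivariant (Fobj F X) (Fobj F Y) (Fmap F X Y f).
Proof.
  induction F; simpl; intros X Y f HX HY Hf; try (intros p u; reflexivity); auto.
  - intros p [i u]; simpl. rewrite H; auto.
  - intros p [u v]; simpl. rewrite IHF1, IHF2; auto.
  - intros p c. pose proof (Fobj_nominal F X HX) as HFX. pose proof (Fobj_nominal F Y HY) as HFY.
    pose proof (IHF X Y f HX HY Hf) as HE.
    destruct (cls_surj _ c) as [[a u] ->].
    rewrite (act_cls _ HFX), !(abs_map_cls _ _ _ _ _ HFX HFY HE), (act_cls _ HFY), HE; auto.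
Qed.

Lemma Fmap_id F : forall X, nominal X -> forall u, Fmap F X X (fun x => x) u = u.
Proof.
  induction F; simpl; intros X HX; auto.
  - intros [i u]; simpl; rewrite H; auto.
  - intros [u v]; simpl; rewrite IHF1, IHF2; auto.
  - intro c. pose proof (Fobj_nominal F X HX) as HFX.
    destruct (cls_surj _ c) as [[a u] ->].
    rewrite (abs_map_cls _ _ _ _ _ HFX HFX); [rewrite IHF; auto|].
    apply Fmap_equiv; auto. intros p v; reflexivity.
Qed.

Lemma Fmap_comp F : forall X Y Z f g, nominal X -> nominal Y -> nominal Z ->
     equivariant X Y f -> equivariant Y Z g ->
     forall u, Fmap F X Z (fun x => g (f x)) u = Fmap F Y Z g (Fmap F X Y f u).
Proof.
  induction F; simpl; intros X Y Z f g HX HY HZ Hf Hg; auto.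
  - intros [i u]; simpl; rewrite H; auto.
  - intros [u v]; simpl; rewrite IHF1, IHF2; auto.
  - intro c. pose proof (Fobj_nominal F X HX) as HFX. pose proof (Fobj_nominal F Y HY) as HFY.
    pose proof (Fobj_nominal F Z HZ) as HFZ.
    assert (Hgf : equivariant X Z (fun x => g (f x))) by (intros p v; rewrite Hf, Hg; auto).
    destruct (cls_surj _ c) as [[a u] ->].
    rewrite (abs_map_cls _ _ _ _ _ HFX HFZ (Fmap_equiv F X Z _ HX HZ Hgf)).
    rewrite (abs_map_cls _ _ _ _ _ HFX HFY (Fmap_equiv F X Y _ HX HY Hf)).
    rewrite (abs_map_cls _ _ _ _ _ HFY HFZ (Fmap_equiv F Y Z _ HY HZ Hg)).
    rewrite IHF; auto.
Qed.

Lemma endofunctor F : is_endofunctor F.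
Proof.
  split; [|split; [|split]]; intros;
    [apply Fobj_nominal|apply Fmap_equiv|apply Fmap_id|apply Fmap_comp]; auto.
Qed.

(** * Monos are injective, epis are surjective *)

(* The nominal subset of pairs related by an equivariant relation; for
   R u v := f u = f v it is the kernel pair of f. *)
Section PairSubset.
Variables (X : preNom) (R : car X -> car X -> Prop).
Hypothesis HX : nominal X.
Hypothesis HR : forall p u v, R u v -> R (act X p u) (act X p v).

Definition PairN : preNom :=
  PreNom { uv : car X * car X | R (fst uv) (snd uv) }
    (fun p uv => exist _ (act X p (fst (proj1_sig uv)), act X p (snd (proj1_sig uv)))
                        (HR p _ _ (proj2_sig uv))).

Lemma PairN_nominal : nominal PairN.
Proof.
  split; [|split].
  - intros [[u v] E]; apply sig_eq; simpl; rewrite !act_id; auto.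
  - intros p q [[u v] E]; apply sig_eq; simpl; rewrite !act_comp; auto.
  - intros [[u v] E]. destruct (has_supp _ HX u) as [A HA], (has_supp _ HX v) as [B HB].
    exists (A ++ B); intros p Hp; apply sig_eq; simpl.
    rewrite HA, HB; auto; [eapply fixes_app_r|eapply fixes_app_l]; eauto.
Qed.
End PairSubset.

(* A mono is injective: it equalizes the two projections of its kernel pair. *)
Lemma mono_inj X Y f : nominal X -> equivariant X Y f -> is_mono X Y f ->
  forall u v, f u = f v -> u = v.
Proof.
  intros HX Hf Hm u v E.
  assert (HR : forall p u v, f u = f v -> f (act X p u) = f (act X p v))
    by (intros p u' v' E'; rewrite !Hf, E'; auto).
  apply (Hm (PairN X _ HR) (PairN_nominal X _ HX HR)
           (fun z => fst (proj1_sig z)) (fun z => snd (proj1_sig z))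
           (fun p z => eq_refl) (fun p z => eq_refl) (fun z => proj2_sig z) (exist _ (u, v) E)).
Qed.

Definition BoolN : preNom := PreNom bool (fun _ b => b).
Lemma BoolN_nominal : nominal BoolN.
Proof. split; [|split]; simpl; auto. intro; exists []; intros p _; reflexivity. Qed.

(* An epi agrees on its image's (equivariant) characteristic map with the
   constant map true, so it is surjective. *)
Lemma epi_surj X Y f : nominal Y -> equivariant X Y f -> is_epi X Y f ->
  forall y, exists x, f x = y.
Proof.
  intros HY Hf He y.
  set (g := fun y : car Y => if excluded_middle_informative (exists x, f x = y) then true else false).
  assert (Hg : equivariant Y BoolN g).
  { intros p y'; simpl; unfold g.
    destruct (excluded_middle_informative (exists x, f x = act Y p y')) as [[x Hx]|N1];
    destruct (excluded_middle_informative (exists x, f x = y')) as [[x' Hx']|N2]; auto.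
    - exfalso; apply N2; exists (act X (pinvp p) x). rewrite Hf, Hx, act_inv_l; auto.
    - exfalso; apply N1; exists (act X p x'). rewrite Hf, Hx'; auto. }
  assert (E : g y = true).
  { apply (He BoolN BoolN_nominal g (fun _ => true) Hg (fun _ _ => eq_refl)).
    intro x; unfold g. destruct (excluded_middle_informative _) as [_|N]; auto.
    exfalso; apply N; eauto. }
  unfold g in E. destruct (excluded_middle_informative _); [auto|discriminate].
Qed.

Lemma inj_mono X Y f : (forall u v, f u = f v -> u = v) -> is_mono X Y f.
Proof. intros H Z _ g h _ _ E z; apply H, E. Qed.
Lemma surj_epi X Y f : (forall y, exists x, f x = y) -> is_epi X Y f.
Proof. intros H Z _ g h _ _ E y. destruct (H y) as [x <-]; apply E. Qed.

Lemma Fmap_inj F : forall X Y f, nominal X -> nominal Y -> equivariant X Y f ->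
  (forall u v, f u = f v -> u = v) ->
  forall u v, Fmap F X Y f u = Fmap F X Y f v -> u = v.
Proof.
  induction F; simpl; intros X Y f HX HY Hf Hi; auto.
  - intros [i u] [j v]; simpl; intro E.
    pose proof (f_equal (@projT1 _ _) E) as E1; simpl in E1; subst j.
    apply inj_pair2 in E. apply H in E; auto. subst; auto.
  - intros [u v] [u' v']; simpl; intro E; injection E; intros; f_equal; eauto.
  - intros c c'. pose proof (Fobj_nominal F X HX) as HFX. pose proof (Fobj_nominal F Y HY) as HFY.
    pose proof (Fmap_equiv F X Y f HX HY Hf) as HE.
    destruct (cls_surj _ c) as [[a u] ->], (cls_surj _ c') as [[b v] ->].
    rewrite !(abs_map_cls _ _ _ _ _ HFX HFY HE). intro E.
    apply (cls_inj _ HFY) in E. apply (cls_eq _ HFX), (alpha_of_all _ HFX).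
    intros z H1 H2 H3 H4. apply (IHF X Y f); auto. rewrite !HE.
    apply (alpha_all _ HFY _ _ _ _ E); auto; apply fresh_map; auto.
Qed.

Lemma Fmap_surj F : forall X Y f, nominal X -> nominal Y -> equivariant X Y f ->
  (forall y, exists x, f x = y) ->
  forall y, exists x, Fmap F X Y f x = y.
Proof.
  induction F; simpl; intros X Y f HX HY Hf Hs; eauto.
  - intros [i y]. destruct (H i X Y f HX HY Hf Hs y) as [x Hx].
    exists (existT _ i x); simpl; rewrite Hx; auto.
  - intros [y1 y2].
    destruct (IHF1 X Y f HX HY Hf Hs y1) as [x1 H1], (IHF2 X Y f HX HY Hf Hs y2) as [x2 H2].
    exists (x1, x2); simpl; rewrite H1, H2; auto.
  - intros c. pose proof (Fobj_nominal F X HX) as HFX. pose proof (Fobj_nominal F Y HY) as HFY.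
    pose proof (Fmap_equiv F X Y f HX HY Hf) as HE.
    destruct (cls_surj _ c) as [[a y] ->]. destruct (IHF X Y f HX HY Hf Hs y) as [x Hx].
    exists (abs_cls _ (a, x)). rewrite (abs_map_cls _ _ _ _ _ HFX HFY HE), Hx; auto.
Qed.

Lemma preserves_monos F : preserves_mono F.
Proof.
  intros X Y f HX HY Hf Hm. apply inj_mono, Fmap_inj; auto. apply mono_inj; auto.
Qed.

Lemma preserves_epis F : preserves_epi F.
Proof.
  intros X Y f HX HY Hf He. apply surj_epi, Fmap_surj; auto. apply epi_surj; auto.
Qed.

(** * Limits of omega^op-chains *)

Definition jointly_injective (D : nat -> preNom) (L : preNom)
  (pi : forall n, car L -> car (D n)) : Prop :=
  forall u v, (forall n, pi n u = pi n v) -> u = v.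

Definition reaches_families (D : nat -> preNom) (d : forall n, car (D (S n)) -> car (D n))
  (L : preNom) (pi : forall n, car L -> car (D n)) : Prop :=
  forall x : forall n, car (D n), (forall n, d n (x (S n)) = x n) ->
    (exists A, forall n, supports (D n) A (x n)) -> exists u, forall n, pi n u = x n.

Section Limits.
Variables (D : nat -> preNom) (d : forall n, car (D (S n)) -> car (D n)).

Definition family_ok (y : forall n, car (D n)) : Prop :=
  (forall n, d n (y (S n)) = y n) /\ (exists A, forall n, supports (D n) A (y n)).

Hypothesis HC : is_chain D d.

Lemma family_act_ok p (y : sig family_ok) : family_ok (fun n => act (D n) p (proj1_sig y n)).
Proof.
  destruct y as [y [Hc [A HA]]]; simpl. destruct HC as [HN HE]. split.
  - intro n. rewrite HE, Hc; auto.
  - exists (map (pf p) A); intro n; apply supports_act; auto.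
Qed.

(* The concrete limit: compatible, uniformly supported families. *)
Definition FamN : preNom :=
  PreNom (sig family_ok)
    (fun p y => exist _ (fun n => act (D n) p (proj1_sig y n)) (family_act_ok p y)).

Lemma FamN_nominal : nominal FamN.
Proof.
  destruct HC as [HN HE].
  split; [|split].
  - intros [y Hy]; apply sig_eq; simpl; apply functional_extensionality_dep; intro n.
    rewrite act_id; auto.
  - intros p q [y Hy]; apply sig_eq; simpl; apply functional_extensionality_dep; intro n.
    rewrite act_comp; auto.
  - intros [y [Hc [A HA]]]. exists A; intros p Hp; apply sig_eq; simpl.
    apply functional_extensionality_dep; intro n; apply HA; auto.
Qed.

(* Uniqueness of mediating maps, tested on the nominal set of pairs with
   equal projections. *)
Lemma limit_jointly_injective L pi : is_limit D d L pi -> jointly_injective D L pi.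
Proof.
  intros [[HL [Hpe Hpc]] HU] u v E.
  assert (HR : forall p u v, (forall n, pi n u = pi n v) ->
                 forall n, pi n (act L p u) = pi n (act L p v))
    by (intros p u' v' H n; rewrite !Hpe, H; auto).
  set (Z := PairN L _ HR).
  assert (Hcone : is_cone D d Z (fun n z => pi n (fst (proj1_sig z)))).
  { split; [apply PairN_nominal; auto|split].
    - intros n p z; simpl; rewrite Hpe; auto.
    - intros n z; apply Hpc. }
  destruct (HU Z _ Hcone) as [w [_ [_ Hw]]].
  assert (E1 := Hw (fun z => fst (proj1_sig z)) (fun p z => eq_refl) (fun n z => eq_refl)
                   (exist _ (u, v) E)).
  assert (E2 := Hw (fun z => snd (proj1_sig z)) (fun p z => eq_refl)
                   (fun n z => eq_sym (proj2_sig z n)) (exist _ (u, v) E)).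
  simpl in E1, E2. congruence.
Qed.

(* Existence of mediating maps from the concrete limit. *)
Lemma limit_reaches_families L pi : is_limit D d L pi -> reaches_families D d L pi.
Proof.
  intros [_ HU] x Hc Hs.
  assert (Hcone : is_cone D d FamN (fun n y => proj1_sig y n)).
  { split; [apply FamN_nominal|split].
    - intros n p y; reflexivity.
    - intros n y; apply (proj1 (proj2_sig y)). }
  destruct (HU FamN _ Hcone) as [w [_ [Hw _]]].
  exists (w (exist _ x (conj Hc Hs))). intro n; apply (Hw n).
Qed.

End Limits.

(* Conversely, a jointly injective cone reaching all families is a limit:
   a cone from a nominal Z yields such families, since z supports them. *)
Lemma limit_of_joint D d L pi : is_cone D d L pi -> jointly_injective D L pi ->
  reaches_families D d L pi -> is_limit D d L pi.
Proof.
  intros Hcone Hi Hs. split; auto.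
  intros Z c [HZ [Hce Hcc]].
  assert (Ex : forall z, exists u, forall n, pi n u = c n z).
  { intro z. apply Hs; auto. destruct (has_supp _ HZ z) as [A HA].
    exists A; intro n. apply (eqv_on_supports Z (D n) (c n) [] A); auto. apply eqv_equiv; auto. }
  exists (fun z => proj1_sig (constructive_indefinite_description _ (Ex z))). split; [|split].
  - intros p z. apply Hi; intro n.
    destruct (constructive_indefinite_description _ (Ex (act Z p z))) as [u1 H1]; simpl.
    destruct (constructive_indefinite_description _ (Ex z)) as [u2 H2]; simpl.
    destruct Hcone as [_ [Hpe _]]. rewrite Hpe, H1, H2, Hce; auto.
  - intros n z. destruct (constructive_indefinite_description _ (Ex z)) as [u2 H2]; simpl; auto.
  - intros u' _ Hu' z. apply Hi; intro n.
    destruct (constructive_indefinite_description _ (Ex z)) as [u2 H2]; simpl. rewrite H2, Hu'; auto.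
Qed.

Lemma const_jinj (K : preNom) : jointly_injective (fun _ => K) K (fun _ x => x).
Proof. intros u v H; apply (H 0). Qed.

Lemma const_reaches (K : preNom) : reaches_families (fun _ => K) (fun _ x => x) K (fun _ x => x).
Proof.
  intros x Hc _. exists (x 0); intro n; induction n; auto. rewrite IHn; symmetry; apply Hc.
Qed.

Lemma sum_jinj I (E : I -> nat -> preNom) (M : I -> preNom)
  (r : forall i n, car (M i) -> car (E i n)) :
  (forall i, jointly_injective (E i) (M i) (r i)) ->
  jointly_injective (fun n => SumN I (fun i => E i n)) (SumN I M)
    (fun n s => existT _ (projT1 s) (r (projT1 s) n (projT2 s))).
Proof.
  intros H [i u] [j v] Huv.
  pose proof (f_equal (@projT1 _ _) (Huv 0)) as E0; simpl in E0; subst j.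
  f_equal. apply (H i); intro n. specialize (Huv n); simpl in Huv. apply inj_pair2 in Huv; auto.
Qed.

(* A compatible family in a coproduct stays in one summand. *)
Lemma sum_reaches I (E : I -> nat -> preNom) (e : forall i n, car (E i (S n)) -> car (E i n))
  (M : I -> preNom) (r : forall i n, car (M i) -> car (E i n)) :
  (forall i, reaches_families (E i) (e i) (M i) (r i)) ->
  reaches_families (fun n => SumN I (fun i => E i n))
    (fun n s => existT _ (projT1 s) (e (projT1 s) n (projT2 s)))
    (SumN I M) (fun n s => existT _ (projT1 s) (r (projT1 s) n (projT2 s))).
Proof.
  intros H x Hc [A HA].
  assert (Hix : forall n, projT1 (x n) = projT1 (x 0)).
  { induction n; auto. rewrite <- IHn, <- (Hc n); reflexivity. }
  destruct (nat_choice (fun n => car (E (projT1 (x 0)) n))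
              (fun n y => x n = existT _ (projT1 (x 0)) y)) as [y Ey].
  { intro n. specialize (Hix n). destruct (x n) as [i y]; simpl in Hix; subst i; eauto. }
  destruct (H _ y) as [u Hu].
  - intro n. pose proof (Hc n) as Hn. rewrite (Ey (S n)), (Ey n) in Hn; simpl in Hn.
    apply inj_pair2 in Hn; auto.
  - exists A; intros n p Hp. pose proof (HA n p Hp) as Hn. rewrite (Ey n) in Hn; simpl in Hn.
    apply inj_pair2 in Hn; auto.
  - exists (existT (fun i => car (M i)) _ u); intro n; simpl. rewrite Hu, Ey; auto.
Qed.

Lemma prod_jinj (E1 E2 : nat -> preNom) M1 M2 r1 r2 :
  jointly_injective E1 M1 r1 -> jointly_injective E2 M2 r2 ->
  jointly_injective (fun n => ProdN (E1 n) (E2 n)) (ProdN M1 M2)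
    (fun n u => (r1 n (fst u), r2 n (snd u))).
Proof.
  intros H1 H2 [u1 u2] [v1 v2] H; simpl in *. f_equal; [apply H1|apply H2]; intro n;
  specialize (H n); injection H; auto.
Qed.

Lemma prod_reaches (E1 E2 : nat -> preNom) e1 e2 M1 M2 r1 r2 :
  reaches_families E1 e1 M1 r1 -> reaches_families E2 e2 M2 r2 ->
  reaches_families (fun n => ProdN (E1 n) (E2 n)) (fun n u => (e1 n (fst u), e2 n (snd u)))
        (ProdN M1 M2) (fun n u => (r1 n (fst u), r2 n (snd u))).
Proof.
  intros H1 H2 x Hc [A HA].
  destruct (H1 (fun n => fst (x n))) as [u1 Hu1];
    [intro n; rewrite <- (Hc n); auto
    |exists A; intros n p Hp; rewrite <- (HA n p Hp) at 2; auto|].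
  destruct (H2 (fun n => snd (x n))) as [u2 Hu2];
    [intro n; rewrite <- (Hc n); auto
    |exists A; intros n p Hp; rewrite <- (HA n p Hp) at 2; auto|].
  exists (u1, u2); intro n; simpl. rewrite Hu1, Hu2; destruct (x n); auto.
Qed.

Lemma abs_jinj (E : nat -> preNom) M (rho : forall n, car M -> car (E n)) :
  (forall n, nominal (E n)) -> nominal M -> (forall n, equivariant M (E n) (rho n)) ->
  jointly_injective E M rho ->
  jointly_injective (fun n => AbsN (E n)) (AbsN M) (fun n => abs_map M (E n) (rho n)).
Proof.
  intros HE HM Hr Hi u v H.
  destruct (cls_surj _ u) as [[a x] ->], (cls_surj _ v) as [[b y] ->].
  apply cls_eq; auto. apply alpha_of_all; auto. intros z H1 H2 H3 H4.
  apply Hi; intro n. specialize (H n). rewrite !abs_map_cls in H; auto.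
  apply cls_inj in H; auto. rewrite !Hr.
  apply (alpha_all _ (HE n) _ _ _ _ H); auto; apply fresh_map; auto.
Qed.

(* A uniformly supported family of abstractions can be written with one
   common bound name a, fresh for the support; the bodies then form a
   compatible, uniformly supported family. *)
Lemma abs_reaches (E : nat -> preNom) e M (rho : forall n, car M -> car (E n)) :
  (forall n, nominal (E n)) -> (forall n, equivariant (E (S n)) (E n) (e n)) -> nominal M ->
  (forall n, equivariant M (E n) (rho n)) ->
  reaches_families E e M rho ->
  reaches_families (fun n => AbsN (E n)) (fun n => abs_map (E (S n)) (E n) (e n)) (AbsN M)
        (fun n => abs_map M (E n) (rho n)).
Proof.
  intros HE He HM Hr Hs x Hc [A HA].
  destruct (exists_fresh A) as [a Ha].
  destruct (nat_choice (fun n => car (E n)) (fun n y => x n = abs_cls (E n) (a, y))) as [y Ey].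
  { intro n; apply (cls_at _ (HE n) A); auto. }
  destruct (Hs y) as [u Hu].
  - intro n. apply (cls_inj_same _ (HE n) a). rewrite <- abs_map_cls by auto.
    rewrite <- !Ey; apply Hc.
  - exists (a :: A); intro n. apply cls_supp; auto. rewrite <- Ey; auto.
  - exists (abs_cls M (a, u)); intro n. rewrite abs_map_cls, Hu, Ey; auto.
Qed.

Lemma Fchain F D d : is_chain D d ->
  is_chain (fun n => Fobj F (D n)) (fun n => Fmap F (D (S n)) (D n) (d n)).
Proof.
  intros [HN HE]; split; intro n; [apply Fobj_nominal|apply Fmap_equiv]; auto.
Qed.

Lemma Flimit_of_joint F D d L pi : is_chain D d -> is_limit D d L pi ->
  jointly_injective (fun n => Fobj F (D n)) (Fobj F L) (fun n => Fmap F L (D n) (pi n)) ->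
  reaches_families (fun n => Fobj F (D n)) (fun n => Fmap F (D (S n)) (D n) (d n))
    (Fobj F L) (fun n => Fmap F L (D n) (pi n)) ->
  is_limit (fun n => Fobj F (D n)) (fun n => Fmap F (D (S n)) (D n) (d n))
    (Fobj F L) (fun n => Fmap F L (D n) (pi n)).
Proof.
  intros [HN HE] [[HL [Hpe Hpc]] _] Hi Hs. apply limit_of_joint; auto.
  split; [apply Fobj_nominal; auto|split].
  - intro n; apply Fmap_equiv; auto.
  - intros n u. rewrite <- Fmap_comp; auto.
    replace (fun x => d n (pi (S n) x)) with (pi n) by (apply functional_extensionality; auto).
    reflexivity.
Qed.

Lemma preserves_limits F : preserves_omega_op_limits F.
Proof.
  induction F as [| K HK | | I HI Fs IH | F1 IH1 F2 IH2 | F1 IH1];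
    intros D d L pi Hch Hlim; try exact Hlim; apply Flimit_of_joint; auto.
  - apply (const_jinj NamesN).
  - apply (const_reaches NamesN).
  - apply (const_jinj K).
  - apply (const_reaches K).
  - apply (sum_jinj I (fun i n => Fobj (Fs i) (D n)) (fun i => Fobj (Fs i) L)
                     (fun i n => Fmap (Fs i) L (D n) (pi n))); intro i. apply (limit_jointly_injective _ _ _ _ (IH i D d L pi Hch Hlim)).
  - apply (sum_reaches I (fun i n => Fobj (Fs i) (D n))
             (fun i n => Fmap (Fs i) (D (S n)) (D n) (d n)) (fun i => Fobj (Fs i) L)
             (fun i n => Fmap (Fs i) L (D n) (pi n))); intro i.
    apply (limit_reaches_families _ _ (Fchain _ _ _ Hch) _ _ (IH i D d L pi Hch Hlim)).
  - exact (prod_jinj _ _ _ _ _ _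
             (limit_jointly_injective _ _ _ _ (IH1 D d L pi Hch Hlim))
             (limit_jointly_injective _ _ _ _ (IH2 D d L pi Hch Hlim))).
  - exact (prod_reaches _ _ _ _ _ _ _ _
             (limit_reaches_families _ _ (Fchain F1 _ _ Hch) _ _ (IH1 D d L pi Hch Hlim))
             (limit_reaches_families _ _ (Fchain F2 _ _ Hch) _ _ (IH2 D d L pi Hch Hlim))).
  - pose proof (limit_jointly_injective _ _ _ _ (IH1 D d L pi Hch Hlim)) as Hi.
    destruct Hch as [HN HE], Hlim as [[HL [Hpe _]] _].
    apply abs_jinj; auto; intros; [apply Fobj_nominal|apply Fobj_nominal|apply Fmap_equiv]; auto.
  - pose proof (limit_reaches_families _ _ (Fchain F1 _ _ Hch) _ _ (IH1 D d L pi Hch Hlim)) as Hs.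
    destruct Hch as [HN HE], Hlim as [[HL [Hpe _]] _].
    apply abs_reaches; auto; intros; first [apply Fobj_nominal|apply Fmap_equiv]; auto.
Qed.

(** * Nom-enrichment *)

Lemma eqv_on_fin X Y g A : nominal X -> nominal Y ->
  eqv_on X Y g A <-> (forall p, fixes p A -> forall u, fun_act X Y p g u = g u).
Proof.
  intros HX HY; split; intros H p Hp u; unfold fun_act in *.
  - rewrite H by (apply fixes_inv; auto). apply act_inv_r; auto.
  - rewrite <- (H p Hp (act X p u)). rewrite act_inv_l; auto.
Qed.

Lemma fin_eqv X Y g : nominal X -> nominal Y -> fin_supp_fun X Y g -> exists A, eqv_on X Y g A.
Proof. intros HX HY [A HA]; exists A; apply eqv_on_fin; auto. Qed.

Lemma eqv_on_act X Y g A p : nominal X -> nominal Y -> eqv_on X Y g A ->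
  eqv_on X Y (fun_act X Y p g) (map (pf p) A).
Proof.
  intros HX HY H q Hq u; unfold fun_act.
  set (r := pcomp (pinvp p) (pcomp q p)).
  assert (Hr : fixes r A).
  { intros a Ha; unfold r; simpl. rewrite (Hq (pf p a)) by (apply in_map; auto). apply pf_K. }
  assert (E1 : pcomp (pinvp p) q = pcomp r (pinvp p)).
  { apply perm_ext; intro n; unfold r; simpl. rewrite pinv_K; auto. }
  assert (E2 : pcomp p r = pcomp q p).
  { apply perm_ext; intro n; unfold r; simpl. rewrite pinv_K; auto. }
  rewrite <- (act_comp X HX (pinvp p) q), E1, act_comp, H by auto.
  rewrite <- (act_comp Y HY p r), E2, act_comp; auto.
Qed.

Lemma eqv_on_comp X Y Z f g A B : eqv_on X Y f A -> eqv_on Y Z g B ->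
  eqv_on X Z (fun x => g (f x)) (A ++ B).
Proof.
  intros Hf Hg p Hp u. rewrite Hf, Hg; auto; [eapply fixes_app_r|eapply fixes_app_l]; eauto.
Qed.

Definition fsupp (X Y : preNom) (g : car X -> car Y) : list nat := choose_or (eqv_on X Y g) [].

Lemma fsupp_spec X Y g A : eqv_on X Y g A -> eqv_on X Y g (fsupp X Y g).
Proof. intro H; unfold fsupp; apply (choose_or_spec (eqv_on X Y g)); eauto. Qed.

Definition avoiding_rep (X : preNom) (C : list nat) (c : abs_car X) : nat * car X :=
  choose_or (fun q => ~ In (fst q) C /\ c = abs_cls X q) (abs_rep X c).

Definition absF (X Y : preNom) (g : car X -> car Y) (c : abs_car X) : abs_car Y :=
  abs_cls Y (fst (avoiding_rep X (fsupp X Y g) c), g (snd (avoiding_rep X (fsupp X Y g) c))).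

Section AbsF.
Variables (X Y : preNom) (HX : nominal X) (HY : nominal Y).

Lemma absF_cls g A a u : eqv_on X Y g A -> ~ In a A ->
  absF X Y g (abs_cls X (a, u)) = abs_cls Y (a, g u).
Proof.
  intros Hg Ha. unfold absF, avoiding_rep.
  destruct (choose_or_spec (fun q => ~ In (fst q) (fsupp X Y g) /\ abs_cls X (a, u) = abs_cls X q)
              (abs_rep X (abs_cls X (a, u))) (cls_avoiding X HX _ _)) as [Hb Hq].
  destruct (choose_or _ _) as [b v]; simpl in *.
  apply cls_eq; auto. apply (alpha_map_on X Y HX HY g (fsupp X Y g) A); auto.
  - apply (fsupp_spec X Y g A); auto.
  - apply alpha_sym, cls_inj; auto.
Qed.

Lemma absF_equiv g c : equivariant X Y g -> absF X Y g c = abs_map X Y g c.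
Proof.
  intro Hg. destruct (cls_surj X c) as [[a u] ->].
  rewrite (absF_cls g []), abs_map_cls; auto. apply eqv_equiv; auto.
Qed.

Lemma absF_supp g A : eqv_on X Y g A -> eqv_on (AbsN X) (AbsN Y) (absF X Y g) A.
Proof.
  intros Hg p Hp c. destruct (cls_avoiding X HX A c) as [[a u] [Ha ->]]; simpl in Ha.
  rewrite (act_cls X HX), !(absF_cls g A), (act_cls Y HY), Hg; auto.
  intro H; apply Ha. rewrite <- (pf_K p a). rewrite <- (Hp _ H) at 1. rewrite pf_K. auto.
Qed.

Lemma absF_act g A p c : eqv_on X Y g A ->
  absF X Y (fun_act X Y p g) c = fun_act (AbsN X) (AbsN Y) p (absF X Y g) c.
Proof.
  intro Hg. destruct (cls_avoiding X HX (A ++ map (pf p) A) c) as [[a u] [Ha ->]]; simpl in Ha.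
  rewrite (absF_cls _ (map (pf p) A)); [|apply eqv_on_act; auto|intro; apply Ha, in_or_app; auto].
  unfold fun_act at 2. rewrite (act_cls X HX), (absF_cls g A), (act_cls Y HY); auto.
  - simpl. rewrite pinv_K. reflexivity.
  - simpl. intro H; apply Ha, in_or_app; right. rewrite <- (pinv_K p a). apply in_map; auto.
Qed.

End AbsF.

Lemma absF_id X (HX : nominal X) c : absF X X (fun x => x) c = c.
Proof.
  destruct (cls_surj X c) as [[a u] ->]. apply (absF_cls X X HX HX (fun x => x) []); auto.
  intros p _ v; reflexivity.
Qed.

Lemma absF_comp X Y Z (HX : nominal X) (HY : nominal Y) (HZ : nominal Z) f g A B c :
  eqv_on X Y f A -> eqv_on Y Z g B ->
  absF X Z (fun x => g (f x)) c = absF Y Z g (absF X Y f c).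
Proof.
  intros Hf Hg. destruct (cls_avoiding X HX (A ++ B) c) as [[a u] [Ha ->]]; simpl in Ha.
  rewrite (absF_cls X Z HX HZ _ (A ++ B)); auto; [|apply eqv_on_comp; auto].
  rewrite (absF_cls X Y HX HY _ A), (absF_cls Y Z HY HZ _ B); auto;
  intro; apply Ha, in_or_app; auto.
Qed.

Fixpoint Ffs (F : Fsyn) (X Y : preNom) (f : car X -> car Y) {struct F}
  : car (Fobj F X) -> car (Fobj F Y) :=
  match F as F0 return car (Fobj F0 X) -> car (Fobj F0 Y) with
  | FV => fun x => x
  | FK K _ => fun k => k
  | FId => f
  | FCoprod J _ Fs => fun s =>
      existT _ (projT1 s) (Ffs (Fs (projT1 s)) X Y f (projT2 s))
  | FProd F1 F2 => fun u => (Ffs F1 X Y f (fst u), Ffs F2 X Y f (snd u))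
  | FAbs F1 => absF (Fobj F1 X) (Fobj F1 Y) (Ffs F1 X Y f)
  end.

Lemma Ffs_Fmap F : forall X Y f, nominal X -> nominal Y -> equivariant X Y f ->
  forall u, Ffs F X Y f u = Fmap F X Y f u.
Proof.
  induction F; simpl; intros X Y f HX HY Hf; auto.
  - intros [i u]; simpl; rewrite H; auto.
  - intros [u v]; simpl; rewrite IHF1, IHF2; auto.
  - intro c. replace (Ffs F X Y f) with (Fmap F X Y f)
      by (apply functional_extensionality; intro; symmetry; auto).
    apply absF_equiv; try apply Fobj_nominal; auto. apply Fmap_equiv; auto.
Qed.

Lemma Ffs_supp F : forall X Y f A, nominal X -> nominal Y -> eqv_on X Y f A ->
  eqv_on (Fobj F X) (Fobj F Y) (Ffs F X Y f) A.
Proof.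
  induction F; simpl; intros X Y f A HX HY Hf; auto; try (intros p _ u; reflexivity).
  - intros p Hp [i u]; simpl; rewrite (H i X Y f A HX HY Hf p Hp); auto.
  - intros p Hp [u v]; simpl.
    rewrite (IHF1 X Y f A HX HY Hf p Hp), (IHF2 X Y f A HX HY Hf p Hp); auto.
  - apply absF_supp; try apply Fobj_nominal; auto.
Qed.

Lemma Ffs_act F : forall X Y f A p, nominal X -> nominal Y -> eqv_on X Y f A ->
  forall u, Ffs F X Y (fun_act X Y p f) u = fun_act (Fobj F X) (Fobj F Y) p (Ffs F X Y f) u.
Proof.
  induction F; simpl; intros X Y f A p HX HY Hf; unfold fun_act; simpl; auto.
  - intro u; rewrite pinv_K; auto.
  - intro u; rewrite act_inv_r; auto.
  - intros [i u]; simpl. rewrite (H i X Y f A p); auto.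
  - intros [u v]; simpl. rewrite (IHF1 X Y f A p), (IHF2 X Y f A p); auto.
  - intro c. fold (fun_act X Y p f).
    replace (Ffs F X Y (fun_act X Y p f)) with (fun_act (Fobj F X) (Fobj F Y) p (Ffs F X Y f))
      by (apply functional_extensionality; intro; symmetry; eapply IHF; eauto).
    apply (absF_act _ _ (Fobj_nominal F X HX) (Fobj_nominal F Y HY) _ A).
    apply Ffs_supp; auto.
Qed.

Lemma Ffs_id F : forall X, nominal X -> forall u, Ffs F X X (fun x => x) u = u.
Proof.
  induction F; simpl; intros X HX; auto.
  - intros [i u]; simpl; rewrite H; auto.
  - intros [u v]; simpl; rewrite IHF1, IHF2; auto.
  - intro c. replace (Ffs F X X (fun x => x)) with (fun x : car (Fobj F X) => x)
      by (apply functional_extensionality; intro; symmetry; auto).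
    apply absF_id, Fobj_nominal; auto.
Qed.

Lemma Ffs_comp F : forall X Y Z f g A B, nominal X -> nominal Y -> nominal Z ->
  eqv_on X Y f A -> eqv_on Y Z g B ->
  forall u, Ffs F X Z (fun x => g (f x)) u = Ffs F Y Z g (Ffs F X Y f u).
Proof.
  induction F; simpl; intros X Y Z f g A B HX HY HZ Hf Hg; auto.
  - intros [i u]; simpl; erewrite H; eauto.
  - intros [u v]; simpl; erewrite IHF1, IHF2; eauto.
  - intro c.
    replace (Ffs F X Z (fun x => g (f x))) with (fun x => Ffs F Y Z g (Ffs F X Y f x))
      by (apply functional_extensionality; intro; symmetry; eapply IHF; eauto).
    apply (absF_comp _ _ _ (Fobj_nominal F X HX) (Fobj_nominal F Y HY) (Fobj_nominal F Z HZ)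
             _ _ A B); apply Ffs_supp; auto.
Qed.

Lemma enriched F : nom_enriched F.
Proof.
  exists (Ffs F). split; [|split; [|split; [|split]]].
  - intros; apply Ffs_Fmap; auto.
  - intros X Y f HX HY Hf. destruct (fin_eqv X Y f HX HY Hf) as [A HA].
    exists A. apply eqv_on_fin; try apply Fobj_nominal; auto. apply Ffs_supp; auto.
  - intros X Y f p HX HY Hf. destruct (fin_eqv X Y f HX HY Hf) as [A HA].
    apply (Ffs_act F X Y f A p); auto.
  - intros; apply Ffs_id; auto.
  - intros X Y Z f g HX HY HZ Hf Hg. destruct (fin_eqv X Y f HX HY Hf) as [A HA].
    destruct (fin_eqv Y Z g HY HZ Hg) as [B HB]. apply (Ffs_comp F X Y Z f g A B); auto.
Qed.

Theorem proposition5p5 (F : Fsyn) :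
  is_endofunctor F /\ preserves_mono F /\ preserves_epi F /\
  preserves_omega_op_limits F /\ nom_enriched F.
Proof.
  split; [apply endofunctor|].
  split; [apply preserves_monos|].
  split; [apply preserves_epis|].
  split; [apply preserves_limits|apply enriched].
Qed.
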